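(* Let $\kappa$ be a regular uncountable cardinal and assume $\kappa^{<\kappa}=\kappa$. If $(L,<_L)$ is a linear order of cardinality $>\kappa$, then Player I has a winning strategy in the game $G_\kappa(L)$. Hence, under $\kappa^{<\kappa}=\kappa$, the game $G_\kappa(L)$ is determined for every linear order $L$.
   Context: For a partial order $(A,\le)$, $X\subseteq A$ is cofinal (coinitial) in $A$ if for every $a\in A$ there is $x\in X$ with $a\le x$ ($a\ge x$); $\mathrm{cf}\,A$ ($\mathrm{ci}\,A$) is the least cardinality of a cofinal (coinitial) subset. For $R\subseteq A$ and $a\in A$ put $R\downarrow a=\{x\in R: x\le a\}$ and $R\uparrow a=\{x\in R: a\le x\}$. $R$ is a $\kappa$-subset of $A$, written $R\le_\kappa A$, if for every $a\in A$, $\mathrm{cf}(R\downarrow a)<\kappa$ and $\mathrm{ci}(R\uparrow a)<\kappa$. The game $G_\kappa(A)$: Players I and II alternately choose subsets $x_\alpha$ (by I) and $y_\alpha$ (by II) of $A$ for $\alpha<\kappa$ (in the order $x_0,y_0,x_1,y_1,\dots$), each of size $<\kappa$, such that $x_\alpha\subseteq y_\alpha$ and $\bigcup_{\nu<\alpha}y_\nu\subseteq x_\alpha$. Player II wins the play iff $R=\bigcup_{\alpha<\kappa}x_\alpha=\bigcup_{\alpha<\kappa}y_\alpha$ satisfies $R\le_\kappa A$; otherwise Player I wins. The game is determined if one of the players has a winning strategy. *)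

(* Sets are predicates [A -> Prop].
   The cardinal kappa is represented by a type K with a strict well-order
   [ltK] which is an initial ordinal (von Neumann cardinal). *)

Set Implicit Arguments.

Definition strict_well_order (K : Type) (ltK : K -> K -> Prop) : Prop :=
  (forall a, ~ ltK a a) /\
  (forall a b c, ltK a b -> ltK b c -> ltK a c) /\
  (forall a b, ltK a b \/ a = b \/ ltK b a) /\
  well_founded ltK.

(* |S| < kappa : S injects into a proper initial segment {beta | beta < alpha}
   of kappa (for a cardinal kappa this is exactly |S| < kappa) *)
Definition small (K : Type) (ltK : K -> K -> Prop) (A : Type) (S : A -> Prop)
  : Prop :=
  exists (alpha : K) (f : A -> K),
    (forall x y, S x -> S y -> f x = f y -> x = y) /\
    (forall x, S x -> ltK (f x) alpha).

Definition regular_uncountable_cardinal (K : Type) (ltK : K -> K -> Prop)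
  : Prop :=
  strict_well_order ltK /\
  (* cardinal: K is not equinumerous to (does not inject into) a smaller ordinal *)
  ~ small ltK (fun _ : K => True) /\
  ~ (exists f : K -> nat, forall a b, f a = f b -> a = b) /\
  (forall S : K -> Prop, small ltK S -> exists alpha, forall beta, S beta -> ltK beta alpha).

(* kappa^{<kappa} = kappa : the set {(alpha, f) | alpha < kappa, f : alpha -> kappa}
   injects into kappa (the reverse inequality is trivial).  A function on the
   segment alpha is represented by any f : K -> K, two being identified when they
   agree below alpha. *)
Definition kappa_lt_kappa_eq_kappa (K : Type) (ltK : K -> K -> Prop) : Prop :=
  exists e : K -> (K -> K) -> K,
    forall alpha alpha' f f',
      e alpha f = e alpha' f' ->
      alpha = alpha' /\ (forall beta, ltK beta alpha -> f beta = f' beta).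

Definition linear_order (L : Type) (le : L -> L -> Prop) : Prop :=
  (forall x, le x x) /\
  (forall x y, le x y -> le y x -> x = y) /\
  (forall x y z, le x y -> le y z -> le x z) /\
  (forall x y, le x y \/ le y x).

Section Orders.
Variables (K : Type) (ltK : K -> K -> Prop) (A : Type) (le : A -> A -> Prop).

Definition cofinal_in (B X : A -> Prop) : Prop :=
  (forall x, X x -> B x) /\ (forall b, B b -> exists x, X x /\ le b x).
Definition coinitial_in (B X : A -> Prop) : Prop :=
  (forall x, X x -> B x) /\ (forall b, B b -> exists x, X x /\ le x b).

Definition down (R : A -> Prop) (a : A) : A -> Prop := fun x => R x /\ le x a.
Definition up (R : A -> Prop) (a : A) : A -> Prop := fun x => R x /\ le a x.

Definition kappa_subset (R : A -> Prop) : Prop :=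
  forall a : A,
    (exists X, cofinal_in (down R a) X /\ small ltK X) /\
    (exists X, coinitial_in (up R a) X /\ small ltK X).

(* a (partial) play: x alpha = move of I at stage alpha, y alpha = move of II *)
Definition trunc (alpha : K) (z : K -> A -> Prop) : K -> A -> Prop :=
  fun nu a => ltK nu alpha /\ z nu a.

Definition union_below (alpha : K) (y : K -> A -> Prop) : A -> Prop :=
  fun a => exists nu, ltK nu alpha /\ y nu a.

Definition legalI (x y : K -> A -> Prop) (alpha : K) : Prop :=
  small ltK (x alpha) /\ (forall a, union_below alpha y a -> x alpha a).

Definition legalII (x y : K -> A -> Prop) (alpha : K) : Prop :=
  small ltK (y alpha) /\ (forall a, x alpha a -> y alpha a).

Definition play_result (x : K -> A -> Prop) : A -> Prop :=
  fun a => exists alpha, x alpha a.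

(* Strategy of I: from the history (moves strictly before alpha) to x_alpha. *)
Definition strategyI := K -> (K -> A -> Prop) -> (K -> A -> Prop) -> (A -> Prop).
(* Strategy of II: from the history and the current move x_alpha to y_alpha. *)
Definition strategyII :=
  K -> (K -> A -> Prop) -> (K -> A -> Prop) -> (A -> Prop) -> (A -> Prop).

Definition follows_I (s : strategyI) (x y : K -> A -> Prop) : Prop :=
  forall alpha, x alpha = s alpha (trunc alpha x) (trunc alpha y).

Definition follows_II (t : strategyII) (x y : K -> A -> Prop) : Prop :=
  forall alpha, y alpha = t alpha (trunc alpha x) (trunc alpha y) (x alpha).

(* I wins a play if II breaks a rule first, or all moves are legal and the
   result is not a kappa-subset. *)
Definition winning_I (s : strategyI) : Prop :=
  forall x y, follows_I s x y ->
    (forall alpha, (forall beta, ltK beta alpha -> legalII x y beta) ->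
                   legalI x y alpha) /\
    ((forall alpha, legalII x y alpha) -> ~ kappa_subset (play_result x)).

(* II wins a play if I breaks a rule first, or all moves are legal and the
   result is a kappa-subset. *)
Definition winning_II (t : strategyII) : Prop :=
  forall x y, follows_II t x y ->
    (forall alpha, (forall beta, ltK beta alpha -> legalI x y beta) ->
                   legalI x y alpha -> legalII x y alpha) /\
    ((forall alpha, legalI x y alpha) -> kappa_subset (play_result x)).

Definition I_has_winning_strategy : Prop := exists s, winning_I s.
Definition II_has_winning_strategy : Prop := exists t, winning_II t.
Definition determined : Prop := I_has_winning_strategy \/ II_has_winning_strategy.

End Orders.

From Stdlib Require Import Classical ClassicalEpsilon FunctionalExtensionality PropExtensionality.

(* Player I fills gaps.  Since kappa^{<kappa} = kappa, every pair of small sets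
   of already played points is coded by an element t of kappa; at stage alpha,
   I adds all points played so far and, for every code t < alpha, one point
   strictly between the two coded sets, if there is one.  These are fewer than
   kappa choices, so I's moves are small.  Suppose II plays legally and the
   result R is a kappa-subset, and let a not be in R.  A small cofinal subset X
   of R below a and a small coinitial subset Y of R above a are completely
   played, and coded by some t, before a stage alpha > t; at that stage a lies
   between X and Y, so I put into R a point strictly between X and Y, which
   contradicts cofinality of X or coinitiality of Y.  Hence R = L, and coding
   each point by the stage at which it was played and its index in that move
   injects L into kappa.  If instead |L| <= kappa, II wins by adding at stage
   alpha the point of L with index alpha. *)

Set Implicit Arguments.

Lemma exists_lt_of_uncountable (K : Type) (ltK : K -> K -> Prop) :
  (forall a b, ltK a b \/ a = b \/ ltK b a) ->
  ~ (exists f : K -> nat, forall a b, f a = f b -> a = b) ->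
  exists z w, ltK z w.
Proof.
  intros ltK_total uncountable. apply NNPP; intros no_lt.
  apply uncountable; exists (fun _ => 0); intros a b _.
  destruct (ltK_total a b) as [lt_ab | [eq_ab | lt_ba]]; [| exact eq_ab |];
    exfalso; apply no_lt; eauto.
Qed.

Lemma trunc_below (K A : Type) (ltK : K -> K -> Prop) (y : K -> A -> Prop) g b :
  ltK b g -> trunc ltK g y b = y b.
Proof.
  intros lt_bg. apply functional_extensionality; intros a.
  apply propositional_extensionality. unfold trunc; tauto.
Qed.

Section Kappa.

Variables (K : Type) (ltK : K -> K -> Prop).
Hypothesis ltK_irrefl : forall a, ~ ltK a a.
Hypothesis ltK_trans : forall a b c, ltK a b -> ltK b c -> ltK a c.
Hypothesis regular :
  forall S : K -> Prop, small ltK S -> exists al, forall b, S b -> ltK b al.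

Lemma small_bounded (S : K -> Prop) al : (forall b, S b -> ltK b al) -> small ltK S.
Proof. intros bounded. exists al, (fun b => b). split; auto. Qed.

Lemma small_subset A (S T : A -> Prop) :
  small ltK S -> (forall a, T a -> S a) -> small ltK T.
Proof. intros [al [f [f_inj f_bounded]]] sub_TS. exists al, f. split; auto. Qed.

Lemma small_image A B (S : A -> Prop) (F : A -> B) (T : B -> Prop) :
  small ltK S -> (forall b, T b -> exists a, S a /\ F a = b) -> small ltK T.
Proof.
  intros [al [f [f_inj f_bounded]]] T_image.
  pose (P b k := exists a, S a /\ F a = b /\ f a = k).
  pose (g b := epsilon (inhabits al) (P b)).
  assert (g_spec : forall b, T b -> P b (g b)).
  { intros b Tb. apply epsilon_spec.
    destruct (T_image b Tb) as [a [Sa Fa]]. exists (f a), a; auto. }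
  exists al, g. split.
  - intros b b' Tb Tb' gb.
    destruct (g_spec b Tb) as [a [Sa [<- fa]]].
    destruct (g_spec b' Tb') as [a' [Sa' [<- fa']]].
    f_equal. apply f_inj; congruence.
  - intros b Tb. destruct (g_spec b Tb) as [a [Sa [_ <-]]]. auto.
Qed.

Lemma bounded_bigcup I (J : I -> Prop) (T : I -> K -> Prop) :
  small ltK J -> (forall i, J i -> small ltK (T i)) ->
  exists al, forall i b, J i -> T i b -> ltK b al.
Proof.
  intros small_J small_T. destruct small_J as [al0 [gJ [gJ_inj gJ_bounded]]].
  pose (bound i := epsilon (inhabits al0) (fun al => forall b, T i b -> ltK b al)).
  assert (bound_spec : forall i, J i -> forall b, T i b -> ltK b (bound i)).
  { intros i Ji. apply (epsilon_spec (inhabits al0) (fun al => forall b, T i b -> ltK b al)).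
    exact (regular (small_T i Ji)). }
  destruct (regular (S := fun al => exists i, J i /\ bound i = al)) as [al bounds_below].
  { apply small_image with (S := J) (F := bound); [exists al0, gJ; auto | auto]. }
  exists al. intros i b Ji Tib.
  apply ltK_trans with (bound i); [exact (bound_spec i Ji b Tib) |].
  apply bounds_below; eauto.
Qed.

Variables z w : K.
Hypothesis lt_z_w : ltK z w.

Lemma small_set1 A (c : A) : small ltK (fun a => a = c).
Proof. exists w, (fun _ => z). split; [intros a b -> -> _ |]; auto. Qed.

Lemma exists_gt k : exists al, ltK k al.
Proof.
  destruct (regular (small_set1 k)) as [al above]. exists al. apply above; reflexivity.
Qed.

Lemma kappa_subset_full A (le : A -> A -> Prop) (R : A -> Prop) :
  (forall a, le a a) -> (forall a, R a) -> kappa_subset ltK le R.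
Proof.
  intros le_refl R_full a.
  split; exists (fun b => b = a); (split; [split |]); auto using small_set1;
    solve [intros b ->; split; auto | intros b [_ le_ab]; exists a; auto].
Qed.

Definition small_inj A (S : A -> Prop) : A -> K :=
  epsilon (inhabits (fun _ => z)) (fun f => forall a b, S a -> S b -> f a = f b -> a = b).

Lemma small_inj_injective A (S : A -> Prop) :
  small ltK S -> forall a b, S a -> S b -> small_inj S a = small_inj S b -> a = b.
Proof.
  intros [al [f [f_inj _]]]. unfold small_inj. apply epsilon_spec. eauto.
Qed.

Variable a0 : K.
Hypothesis lt_w_a0 : ltK w a0.
Variable e : K -> (K -> K) -> K.
Hypothesis e_inj : forall al al' f f', e al f = e al' f' ->
  al = al' /\ (forall be, ltK be al -> f be = f' be).

Definition kpair (a b : K) : K :=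
  e a0 (fun d => if excluded_middle_informative (d = z) then a else b).

Lemma kpair_inj a b a' b' : kpair a b = kpair a' b' -> a = a' /\ b = b'.
Proof.
  unfold kpair; intros E. destruct (e_inj E) as [_ agree]. split.
  - specialize (agree z (ltK_trans lt_z_w lt_w_a0)).
    destruct (excluded_middle_informative (z = z)); [exact agree | congruence].
  - specialize (agree w lt_w_a0).
    destruct (excluded_middle_informative (w = z)) as [-> | _]; [| exact agree].
    destruct (ltK_irrefl lt_z_w).
Qed.

Lemma small_bigcup I A (J : I -> Prop) (S : I -> A -> Prop) :
  small ltK J -> (forall i, J i -> small ltK (S i)) ->
  small ltK (fun a => exists i, J i /\ S i a).
Proof.
  intros small_J small_S.
  pose (code (p : I * A) := kpair (small_inj J (fst p)) (small_inj (S (fst p)) (snd p))).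
  apply small_image with (S := fun p : I * A => J (fst p) /\ S (fst p) (snd p)) (F := snd).
  2: { intros a [i [Ji Sia]]. exists (i, a); auto. }
  destruct (@bounded_bigcup _ J (fun i k => exists a, S i a /\ code (i, a) = k) small_J)
    as [al code_bounded].
  { intros i Ji. apply small_image with (S := S i) (F := fun a => code (i, a)); auto. }
  exists al, code. split.
  - intros [i a] [j b] [Ji Sia] [Jj Sjb] E; simpl in *.
    destruct (kpair_inj E) as [E_ij E_ab]; simpl in E_ij, E_ab.
    assert (i = j) as <- by exact (small_inj_injective small_J _ _ Ji Jj E_ij).
    f_equal. exact (small_inj_injective (small_S i Ji) _ _ Sia Sjb E_ab).
  - intros [i a] [Ji Sia]. apply (code_bounded i); eauto.
Qed.

Lemma small_setU A (S T : A -> Prop) :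
  small ltK S -> small ltK T -> small ltK (fun a => S a \/ T a).
Proof.
  intros small_S small_T.
  apply small_subset with (fun a => exists b : bool, True /\ (if b then S a else T a)).
  - apply small_bigcup; [| intros [] _; assumption].
    exists a0, (fun b : bool => if b then z else w). split.
    + intros [] [] _ _ E; auto; rewrite E in lt_z_w; destruct (ltK_irrefl lt_z_w).
    + intros [] _; eauto.
  - intros a [Sa | Ta]; [exists true | exists false]; auto.
Qed.

(* A small S, injected by f below al, is coded by e applied to al and the
   function f s |-> (w, s); points below al outside the image of f are padded
   with (z, z), which never decodes to an element. *)
Definition decode (t s : K) : Prop :=
  exists al h, e al h = t /\ exists d, ltK d al /\ h d = kpair w s.

Lemma small_decodable (S : K -> Prop) :
  small ltK S -> exists t, forall s, decode t s <-> S s.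
Proof.
  intros [al [f [f_inj f_bounded]]].
  pose (P d s := S s /\ f s = d).
  pose (h d := if excluded_middle_informative (exists s, P d s)
               then kpair w (epsilon (inhabits z) (P d)) else kpair z z).
  exists (e al h). intros s. split.
  - intros [al' [h' [E [d [lt_d h'd]]]]]. destruct (e_inj E) as [<- agree].
    rewrite agree in h'd by exact lt_d. unfold h in h'd.
    destruct (excluded_middle_informative _) as [ex | _];
      destruct (kpair_inj h'd) as [E1 E2].
    + rewrite <- E2. exact (proj1 (epsilon_spec (inhabits z) (P d) ex)).
    + rewrite E1 in lt_z_w. destruct (ltK_irrefl lt_z_w).
  - intros Ss. exists al, h. split; [reflexivity |].
    exists (f s). split; [auto |]. unfold h.
    destruct (excluded_middle_informative _) as [ex | no]; [| exfalso; apply no; exists s; split; auto].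
    destruct (epsilon_spec (inhabits z) (P (f s)) ex) as [S' E'].
    f_equal. apply f_inj; auto.
Qed.

Section GapFilling.

Variables (L : Type) (leL : L -> L -> Prop).
Hypothesis leL_refl : forall a, leL a a.
Hypothesis leL_anti : forall a b, leL a b -> leL b a -> a = b.
Hypothesis leL_total : forall a b, leL a b \/ leL b a.

Definition ltL (a b : L) : Prop := leL a b /\ a <> b.

Lemma no_point_between (R X Y : L -> Prop) a c :
  cofinal_in leL (down leL R a) X -> coinitial_in leL (up leL R a) Y -> R c ->
  (forall x, X x -> ltL x c) -> (forall y, Y y -> ltL c y) -> False.
Proof.
  intros [_ X_cofinal] [_ Y_coinitial] Rc X_below Y_above.
  destruct (leL_total c a) as [le_ca | le_ac].
  - destruct (X_cofinal c (conj Rc le_ca)) as [x [Xx le_cx]].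
    destruct (X_below x Xx) as [le_xc ne_xc]. apply ne_xc, leL_anti; assumption.
  - destruct (Y_coinitial c (conj Rc le_ac)) as [y [Yy le_yc]].
    destruct (Y_above y Yy) as [le_cy ne_cy]. apply ne_cy, leL_anti; assumption.
Qed.

Definition stage_code (y : K -> L -> Prop) (be : K) (b : L) : K :=
  kpair be (small_inj (y be) b).

(* The stage be is quantified over rather than chosen, so that the decoded set
   does not depend on which earlier move contained b. *)
Definition decode_played (y : K -> L -> Prop) (t : K) (b : L) : Prop :=
  exists be, y be b /\ decode t (stage_code y be b).

Definition gap (y : K -> L -> Prop) (t : K) (c : L) : Prop :=
  exists t1 t2, t = kpair t1 t2 /\
    (forall b, decode_played y t1 b -> ltL b c) /\
    (forall b, decode_played y t2 b -> ltL c b).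

Definition fill_gaps (l0 : L) : strategyI K L := fun g _ yh a =>
  (exists nu, yh nu a) \/
  (exists t, ltK t g /\ gap yh t a /\ a = epsilon (inhabits l0) (gap yh t)).

Lemma fill_gaps_legal l0 x y g :
  follows_I ltK (fill_gaps l0) x y ->
  (forall be, ltK be g -> legalII ltK x y be) -> legalI ltK x y g.
Proof.
  intros follows legal_before. unfold legalI. rewrite follows. split.
  - apply small_setU.
    + apply small_bigcup with (J := fun nu => ltK nu g) (S := y).
      * apply small_bounded with g; auto.
      * intros nu lt_nu. exact (proj1 (legal_before nu lt_nu)).
    + apply small_image with (S := fun t => ltK t g)
        (F := fun t => epsilon (inhabits l0) (gap (trunc ltK g y) t)).
      * apply small_bounded with g; auto.
      * intros c [t [lt_t [_ Ec]]]. eauto.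
  - intros a played. left. exact played.
Qed.

Section Play.

Variables (l0 : L) (x y : K -> L -> Prop).
Hypothesis follows : follows_I ltK (fill_gaps l0) x y.
Hypothesis legal : forall al, legalII ltK x y al.

Definition stage (a : L) : K := epsilon (inhabits z) (fun be => y be a).

Definition code (a : L) : K := stage_code y (stage a) a.

Lemma stage_spec a : play_result x a -> y (stage a) a.
Proof.
  intros [al xa]. apply (epsilon_spec (inhabits z) (fun be => y be a)).
  exists al. exact (proj2 (legal al) a xa).
Qed.

Lemma stage_code_inj be be' b b' :
  y be b -> y be' b' -> stage_code y be b = stage_code y be' b' -> be = be' /\ b = b'.
Proof.
  intros yb yb' E. destruct (kpair_inj E) as [<- E_idx]. split; [reflexivity |].
  exact (small_inj_injective (proj1 (legal be)) _ _ yb yb' E_idx).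
Qed.

Lemma code_injective a b :
  play_result x a -> play_result x b -> code a = code b -> a = b.
Proof.
  intros Ra Rb E. exact (proj2 (stage_code_inj (stage_spec Ra) (stage_spec Rb) E)).
Qed.

Lemma decode_played_trunc (Z : L -> Prop) t g :
  (forall b, Z b -> play_result x b) -> (forall b, Z b -> ltK (stage b) g) ->
  (forall s, decode t s <-> exists b, Z b /\ code b = s) ->
  forall b, decode_played (trunc ltK g y) t b <-> Z b.
Proof.
  intros Z_played Z_early t_codes b. split.
  - intros [be [[lt_be yb] decoded]]. unfold stage_code in decoded.
    rewrite trunc_below in decoded by exact lt_be.
    apply t_codes in decoded as [b' [Zb' E]].
    destruct (stage_code_inj (stage_spec (Z_played b' Zb')) yb E) as [_ ->]. exact Zb'.
  - intros Zb. exists (stage b). split.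
    + split; [exact (Z_early b Zb) | exact (stage_spec (Z_played b Zb))].
    + unfold stage_code. rewrite trunc_below by exact (Z_early b Zb). apply t_codes. eauto.
Qed.

Lemma gap_filled t g :
  ltK t g -> (exists a, gap (trunc ltK g y) t a) ->
  exists c, play_result x c /\ gap (trunc ltK g y) t c.
Proof.
  intros lt_tg nonempty. pose (c := epsilon (inhabits l0) (gap (trunc ltK g y) t)).
  assert (gap_c : gap (trunc ltK g y) t c) by exact (epsilon_spec _ _ nonempty).
  exists c. split; [| exact gap_c].
  exists g. rewrite follows. right. exists t. auto.
Qed.

Lemma play_result_full : kappa_subset ltK leL (play_result x) -> forall a, play_result x a.
Proof.
  intros R_kappa a. apply NNPP; intros not_Ra.
  destruct (R_kappa a) as [[X [X_cofinal small_X]] [Y [Y_coinitial small_Y]]].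
  pose proof (proj1 X_cofinal) as X_sub. pose proof (proj1 Y_coinitial) as Y_sub.
  destruct (small_decodable (S := fun s => exists b, X b /\ code b = s)) as [t1 t1_codes].
  { apply small_image with (S := X) (F := code); auto. }
  destruct (small_decodable (S := fun s => exists b, Y b /\ code b = s)) as [t2 t2_codes].
  { apply small_image with (S := Y) (F := code); auto. }
  destruct (regular (S := fun k => k = kpair t1 t2 \/ exists b, (X b \/ Y b) /\ stage b = k))
    as [g after].
  { apply small_setU; [apply small_set1 |].
    apply small_image with (S := fun b => X b \/ Y b) (F := stage); [apply small_setU |]; auto. }
  assert (early : forall b, X b \/ Y b -> ltK (stage b) g) by (intros b XYb; apply after; eauto).
  assert (X_decoded : forall b, decode_played (trunc ltK g y) t1 b <-> X b).
  { apply decode_played_trunc; [intros b Xb; apply X_sub, Xb | auto | exact t1_codes]. }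
  assert (Y_decoded : forall b, decode_played (trunc ltK g y) t2 b <-> Y b).
  { apply decode_played_trunc; [intros b Yb; apply Y_sub, Yb | auto | exact t2_codes]. }
  destruct (gap_filled (t := kpair t1 t2) (g := g)) as [c [Rc [t1' [t2' [E [below above]]]]]].
  - apply after. left. reflexivity.
  - exists a, t1, t2. split; [reflexivity |]. split.
    + intros b Xb%X_decoded. destruct (X_sub b Xb) as [Rb le_ba].
      split; [exact le_ba | intros ->; exact (not_Ra Rb)].
    + intros b Yb%Y_decoded. destruct (Y_sub b Yb) as [Rb le_ab].
      split; [exact le_ab | intros <-; exact (not_Ra Rb)].
  - destruct (kpair_inj E) as [<- <-].
    apply (no_point_between X_cofinal Y_coinitial Rc).
    + intros b Xb. apply below, X_decoded, Xb.
    + intros b Yb. apply above, Y_decoded, Yb.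
Qed.

End Play.

Lemma I_wins_large_order :
  ~ (exists f : L -> K, forall a b, f a = f b -> a = b) -> I_has_winning_strategy ltK leL.
Proof.
  intros large.
  destruct (classic (inhabited L)) as [[l0] | empty].
  2: { exfalso. apply large. exists (fun a => match empty (inhabits a) with end).
       intros a. destruct (empty (inhabits a)). }
  exists (fill_gaps l0). intros x y follows. split.
  - intros g legal_before. exact (fill_gaps_legal follows legal_before).
  - intros legal R_kappa. apply large. exists (code y). intros a b.
    apply (code_injective legal); apply (play_result_full follows legal R_kappa).
Qed.

Lemma II_wins_small_order (f : L -> K) :
  (forall a b, f a = f b -> a = b) -> II_has_winning_strategy ltK leL.
Proof.
  intros f_inj. exists (fun al _ _ xa a => xa a \/ f a = al).
  intros x y follows. split.
  - intros al _ [small_x _]. unfold legalII. rewrite follows. split.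
    + apply small_setU; [exact small_x |].
      destruct (exists_gt al) as [be lt_al].
      exists be, f. split; [auto | intros a <-; exact lt_al].
    + intros a xa. left. exact xa.
  - intros legal. apply kappa_subset_full; [exact leL_refl |].
    intros a. destruct (exists_gt (f a)) as [be lt_be]. exists be.
    apply (proj2 (legal be)). exists (f a). split; [exact lt_be |].
    rewrite follows. right. reflexivity.
Qed.

End GapFilling.

End Kappa.

Theorem proposition2 (K : Type) (ltK : K -> K -> Prop)
  (Hk : regular_uncountable_cardinal ltK)
  (Hpow : kappa_lt_kappa_eq_kappa ltK) :
  (forall (L : Type) (leL : L -> L -> Prop),
      linear_order leL ->
      (* |L| > kappa *)
      ~ (exists f : L -> K, forall a b, f a = f b -> a = b) ->
      I_has_winning_strategy ltK leL) /\
  (forall (L : Type) (leL : L -> L -> Prop),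
      linear_order leL -> determined ltK leL).
Proof.
  destruct Hk as [[irrefl [trans [total _]]] [_ [uncountable regular]]].
  destruct Hpow as [e e_inj].
  destruct (exists_lt_of_uncountable ltK total uncountable) as [z [w lt_zw]].
  destruct (exists_gt regular z w lt_zw w) as [a0 lt_wa0].
  assert (I_wins : forall (L : Type) (leL : L -> L -> Prop), linear_order leL ->
            ~ (exists f : L -> K, forall a b, f a = f b -> a = b) ->
            I_has_winning_strategy ltK leL).
  { intros L leL [refl [anti [_ tot]]].
    exact (I_wins_large_order irrefl trans regular z w lt_zw a0 lt_wa0 e e_inj leL refl anti tot). }
  split; [exact I_wins |].
  intros L leL order.
  destruct (classic (exists f : L -> K, forall a b, f a = f b -> a = b)) as [[f f_inj] | large].
  - right. destruct order as [refl _].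
    exact (II_wins_small_order irrefl trans regular z w lt_zw a0 lt_wa0 e e_inj leL refl f f_inj).
  - left. exact (I_wins L leL order large).
Qed.
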